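(* Let $s\ge2$ and $q_0,\dots,q_{s-1}>0$ with $\sum_iq_i=1$, and consider the $Q$-expansion of $[0,1]$ with these ratios. Then the family $\varPhi$ of (interiors of) $Q$-cylinders is faithful for packing dimension calculation: $\dim_P(E,\varPhi)=\dim_{P(\mathit{unc})}(E)$ for every $E\subset[0,1]$.
   Context: The $Q$-expansion writes $x=\sum_k\beta_{a_k}\prod_{j<k}q_{a_j}$ with $\beta_i=\sum_{l<i}q_l$, digits $a_k\in\{0,\dots,s-1\}$; the rank-$n$ cylinder $\{x:a_j(x)=c_j, j\le n\}$ is an interval of length $\prod_{j\le n}q_{c_j}$. In $\mathbb R$: an uncentered $\varepsilon$-packing of $E$ is a countable family of pairwise disjoint open intervals of length $\le\varepsilon$ each meeting $E$; $\mathcal P^\alpha_{\varepsilon(\mathit{unc})}(E)=\sup\sum|E_i|^\alpha$, $\mathcal P^\alpha_{0(\mathit{unc})}=\lim_{\varepsilon\to0}$, $\mathcal P^\alpha_{(\mathit{unc})}(E)=\inf\{\sum_j\mathcal P^\alpha_{0(\mathit{unc})}(E_j):E\subset\bigcup E_j\}$, $\dim_{P(\mathit{unc})}(E)=\inf\{\alpha:\mathcal P^\alpha_{(\mathit{unc})}(E)=0\}$; $\dim_P(E,\varPhi)$ is the same using only packings by intervals from $\varPhi$. *)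

From HB Require Import structures.
From mathcomp Require Import all_boot all_order all_algebra.
From mathcomp Require Import all_classical all_reals all_analysis.
Set Implicit Arguments. Unset Strict Implicit. Unset Printing Implicit Defensive.
Import Order.TTheory GRing.Theory Num.Theory.
Local Open Scope classical_set_scope.
Local Open Scope ring_scope.

Section QCylinders.
Variables (R : realType) (s : nat) (q : 'I_s -> R).

Definition qbeta (i : 'I_s) : R := \sum_(l < s | (l < i)%N) q l.

(* left endpoint of the cylinder with digits c_1 ... c_n :
   sum_k beta_{c_k} prod_{j<k} q_{c_j} *)
Fixpoint cyl_left (c : seq 'I_s) : R :=
  match c with
  | [::] => 0
  | a :: c' => qbeta a + q a * cyl_left c'
  end.

Definition cyl_len (c : seq 'I_s) : R := \prod_(a <- c) q a.

Definition qcyl_interiors : set (R * R) :=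
  [set p | exists c : seq 'I_s, p = (cyl_left c, cyl_left c + cyl_len c)].
End QCylinders.

Section Packing.
Variable R : realType.

(* An open interval ]a,b[ is encoded by the pair (a,b). *)
Definition is_packing (Adm : set (R * R)) (eps : R) (E : set R)
    (P : set (R * R)) : Prop :=
  [/\ countable P, P `<=` Adm,
      (forall p, P p -> [/\ p.1 < p.2, p.2 - p.1 <= eps &
                            (`]p.1, p.2[ `&` E) !=set0]) &
      (forall p p', P p -> P p' -> p <> p' ->
          `]p.1, p.2[ `&` `]p'.1, p'.2[ = set0)].

Definition pack_eps (Adm : set (R * R)) (alpha eps : R) (E : set R) : \bar R :=
  ereal_sup [set (\esum_(p in P) ((p.2 - p.1) `^ alpha)%:E)%E
            | P in is_packing Adm eps E].

(* P_0 = lim_{eps -> 0} P_eps; P_eps is nondecreasing in eps,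
   so the limit is the infimum over eps > 0 *)
Definition pack0 (Adm : set (R * R)) (alpha : R) (E : set R) : \bar R :=
  ereal_inf [set pack_eps Adm alpha eps E | eps in [set e : R | 0 < e]].

Definition pack_measure (Adm : set (R * R)) (alpha : R) (E : set R) : \bar R :=
  ereal_inf [set (\sum_(j <oo) pack0 Adm alpha (F j))%E
            | F in [set F : nat -> set R | E `<=` \bigcup_j F j]].

Definition pack_dim (Adm : set (R * R)) (E : set R) : \bar R :=
  ereal_inf [set alpha%:E | alpha in
              [set a : R | 0 <= a /\ pack_measure Adm a E = 0%E]].

Definition pack_dim_unc (E : set R) : \bar R := pack_dim setT E.
End Packing.

From HB Require Import structures.
From mathcomp Require Import all_boot all_order all_algebra.
From mathcomp Require Import all_classical all_reals all_analysis.
From mathcomp Require Import ring lra.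
Import Order.TTheory GRing.Theory Num.Theory.
Local Open Scope classical_set_scope.
Local Open Scope ring_scope.

(* Cylinder interiors are open intervals, so a packing by cylinders is an
   uncentered packing and dim_P(E, Phi) <= dim_P(unc)(E).  Conversely, fix
   a < b and a set F avoiding the countably many cylinder endpoints on which
   every cylinder d-packing has a-sum at most M.  A point of F lies in a
   "stopping" cylinder of length between qmin * d and d, distinct stopping
   cylinders are disjoint, and at most 4 disjoint intervals of length in
   ]d/2, d] can be attached to the same one.  Hence an uncentered packing of F
   contains at most 4 M / (qmin d)^a intervals of length in ]d/2, d], and
   summing over the dyadic scales d, d/2, d/4, ... bounds its b-sum by
   (4 M / qmin^a) d^(b-a) / (1 - 2^(a-b)), which tends to 0 with d. *)

Set Implicit Arguments. Unset Strict Implicit. Unset Printing Implicit Defensive.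

Lemma exists_expr_le (R : realType) (r e : R) :
  0 <= r < 1 -> 0 < e -> exists n : nat, r ^+ n <= e.
Proof.
move=> /andP[r0 r1] e0.
have /cvgrPdist_lt/(_ e e0) [N _ hN] : (fun n => r ^+ n) @ \oo --> (0 : R^o).
  by apply: cvg_expr; rewrite ger0_norm.
by exists N; move: (hN N (leqnn N)); rewrite /= sub0r normrN ger0_norm ?exprn_ge0 // => /ltW.
Qed.

Lemma truncn_sep (R : realType) (u h a a' : R) : 0 < h -> u <= a -> a + h <= a' ->
  (Num.trunc ((a - u) / h) < Num.trunc ((a' - u) / h))%N.
Proof.
move=> h0 ua aa'; have t0 : 0 <= (a - u) / h by rewrite divr_ge0 ?subr_ge0 // ltW.
have t1 : (a - u) / h + 1 <= (a' - u) / h.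
  by rewrite ler_pdivlMr // mulrDl divfK ?lt0r_neq0 // mul1r; lra.
rewrite truncn_ge_nat; last by apply: le_trans t1; rewrite addr_ge0.
by rewrite -natr1 (le_trans _ t1) // lerD2r truncn_le.
Qed.

Lemma itv_disjoint_le (R : realType) (p p' : R * R) : p'.1 < p'.2 -> p.1 <= p'.1 ->
  `]p.1, p.2[ `&` `]p'.1, p'.2[ = set0 -> p.2 <= p'.1.
Proof.
move=> p'12 pp' /seteqP[disj _]; rewrite leNgt; apply/negP => p'p.
pose m := Num.min p.2 p'.2.
have p'm : p'.1 < m by rewrite lt_min p'p p'12.
have [mp mp'] : m <= p.2 /\ m <= p'.2 by rewrite !ge_min !lexx ?orbT.
by apply: (disj ((p'.1 + m) / 2)); split; rewrite /= in_itv /=; apply/andP; split; lra.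
Qed.

Lemma size_le_mul_undup (T U : eqType) k (r : seq T) (g : T -> U) (i : T -> 'I_k) :
  uniq r -> {in r &, injective (fun x => (g x, i x))} ->
  (size r <= k * size (undup (map g r)))%N.
Proof.
move=> r_uniq gi_inj.
have gi_uniq : uniq (map (fun x => (g x, i x)) r) by rewrite map_inj_in_uniq.
have := uniq_leq_size (s2 := [seq (b, j) | b <- undup (map g r), j <- enum 'I_k]) gi_uniq.
rewrite size_map size_allpairs size_enum_ord mulnC; apply.
move=> _ /mapP[x xr ->]; apply: allpairs_f; last by rewrite mem_enum.
by rewrite mem_undup map_f.
Qed.

Lemma sumr_const_seq (V : nmodType) (T : Type) (r : seq T) (x : V) :
  \sum_(i <- r) x = x *+ size r.
Proof. by rewrite big_const_seq count_predT iter_addr_0. Qed.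

Lemma exists_itv_len_lb (R : realType) (r : seq (R * R)) :
  (forall p, p \in r -> p.1 < p.2) -> exists2 m, 0 < m & forall p, p \in r -> m <= p.2 - p.1.
Proof.
elim: r => [|p r IH] r_pos; first by exists 1.
have [|m m0 mr] := IH; first by move=> p' p'r; apply: r_pos; rewrite inE p'r orbT.
exists (Num.min m (p.2 - p.1)); first by rewrite lt_min m0 subr_gt0 r_pos ?mem_head.
by move=> p'; rewrite inE => /orP[/eqP->|/mr p'm]; rewrite ge_min ?lexx ?orbT ?p'm.
Qed.

Section QExpansion.
Variables (R : realType) (s : nat) (q : 'I_s -> R).
Hypothesis q_gt0 : forall i, 0 < q i.
Hypothesis sum_q : \sum_(i < s) q i = 1.

Lemma cyl_len_nil : cyl_len q [::] = 1.
Proof. by rewrite /cyl_len big_nil. Qed.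

Lemma cyl_len_cons a c : cyl_len q (a :: c) = q a * cyl_len q c.
Proof. by rewrite /cyl_len big_cons. Qed.

Lemma cyl_len_cat c d : cyl_len q (c ++ d) = cyl_len q c * cyl_len q d.
Proof. by rewrite /cyl_len big_cat. Qed.

Lemma cyl_len_rcons c a : cyl_len q (rcons c a) = cyl_len q c * q a.
Proof. by rewrite -cats1 cyl_len_cat /cyl_len big_seq1. Qed.

Lemma cyl_len_gt0 c : 0 < cyl_len q c.
Proof. by apply: prodr_gt0 => i _; exact: q_gt0. Qed.

Lemma q_le1 i : q i <= 1.
Proof. by rewrite -sum_q (bigD1 i) //= lerDl sumr_ge0 // => j _; exact: ltW. Qed.

Lemma cyl_len_le1 c : cyl_len q c <= 1.
Proof. by apply: prodr_ile1 => i _; rewrite q_le1 ltW. Qed.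

Lemma cyl_len_cat_le c d : cyl_len q (c ++ d) <= cyl_len q c.
Proof. by rewrite cyl_len_cat ler_piMr ?cyl_len_le1 ?ltW ?cyl_len_gt0. Qed.

Definition qpart (k : nat) : R := \sum_(i < s | (i < k)%N) q i.

Lemma qbetaE a : qbeta q a = qpart a.
Proof. by []. Qed.

Lemma qpart0 : qpart 0 = 0.
Proof. by rewrite /qpart big_pred0. Qed.

Lemma qpart_ge k : (s <= k)%N -> qpart k = 1.
Proof. by move=> sk; rewrite -sum_q; apply: eq_bigl => i; rewrite (leq_trans _ sk). Qed.

Lemma qpart_succ k (ks : (k < s)%N) : qpart k.+1 = qpart k + q (Ordinal ks).
Proof.
rewrite /qpart (bigD1 (Ordinal ks)) //= addrC; congr (_ + _).
by apply: eq_bigl => i; rewrite ltnS -val_eqE /= ltn_neqAle andbC; case: ltngtP.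
Qed.

Lemma qpart_homo : {homo qpart : m n / (m <= n)%N >-> m <= n}.
Proof.
move=> m n mn; rewrite /qpart !(big_mkcond (fun i : 'I_s => (i < _)%N)).
apply: ler_sum => i _; case: ifP => [im|_]; first by rewrite (leq_trans im mn).
by case: ifP => // _; exact: ltW.
Qed.

Lemma qpart_ge0 k : 0 <= qpart k.
Proof. by rewrite -qpart0 qpart_homo. Qed.

Lemma qpart_le1 k : qpart k <= 1.
Proof.
case: (leqP k s) => [ks|/ltnW/qpart_ge -> //].
by rewrite -(qpart_ge (leqnn s)) qpart_homo.
Qed.

Lemma qbeta_addq (a : 'I_s) : qbeta q a + q a = qpart a.+1.
Proof. by rewrite (qpart_succ (ltn_ord a)); congr (_ + q _); exact: val_inj. Qed.

Lemma qbeta_lt (a b : 'I_s) : (a < b)%N -> qbeta q a + q a <= qbeta q b.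
Proof. by move=> ab; rewrite qbeta_addq qbetaE qpart_homo. Qed.

Lemma cyl_left_ge0 c : 0 <= cyl_left q c.
Proof.
elim: c => [|a c IH] //=.
by rewrite addr_ge0 ?mulr_ge0 ?qbetaE ?qpart_ge0 // ltW.
Qed.

Lemma cyl_right_le1 c : cyl_left q c + cyl_len q c <= 1.
Proof.
elim: c => [|a c IH] /=; first by rewrite cyl_len_nil add0r.
rewrite cyl_len_cons -addrA -mulrDr (le_trans _ (qpart_le1 a.+1)) //.
by rewrite -qbeta_addq lerD2l ler_piMr // ltW.
Qed.

Definition qmin : R := \prod_(i < s) q i.

Lemma qmin_gt0 : 0 < qmin.
Proof. by apply: prodr_gt0 => i _; exact: q_gt0. Qed.

Lemma qmin_le i : qmin <= q i.
Proof.
rewrite /qmin (bigD1 i) //= ler_piMr ?(ltW (q_gt0 i)) //.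
by apply: prodr_ile1 => j _; rewrite q_le1 ltW.
Qed.

Lemma q_le1_qmin (s_ge2 : (2 <= s)%N) i : q i <= 1 - qmin.
Proof.
have [j ji] : exists j : 'I_s, j != i.
  have s0 : (0 < s)%N by exact: ltnW.
  case: (eqVneq (val i) 0%N) => i0; [exists (Ordinal s_ge2)|exists (Ordinal s0)];
    by rewrite -val_eqE /= ?i0 // eq_sym.
rewrite lerBrDr -sum_q (bigD1 i) //= lerD2l (bigD1 j) //= (le_trans (qmin_le j)) //.
by rewrite lerDl sumr_ge0 // => k _; exact: ltW.
Qed.

Definition in_cyl (c : seq 'I_s) (x : R) : bool :=
  cyl_left q c < x < cyl_left q c + cyl_len q c.

Lemma in_cyl_cons a c x : in_cyl (a :: c) x = in_cyl c ((x - qbeta q a) / q a).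
Proof.
have qa := q_gt0 a.
rewrite /in_cyl /= cyl_len_cons ltr_pdivlMr // ltr_pdivrMr //.
by rewrite ltrBrDl ltrBlDl mulrDl addrA !(mulrC _ (q a)).
Qed.

Lemma in_cyl_cons_digit a c x : in_cyl (a :: c) x -> qbeta q a < x < qbeta q a + q a.
Proof.
rewrite /in_cyl /= cyl_len_cons => /andP[x1 x2].
have qa := q_gt0 a.
have : q a * cyl_left q c + q a * cyl_len q c <= q a.
  by rewrite -mulrDr ler_piMr ?cyl_right_le1 // ltW.
have : 0 <= q a * cyl_left q c by rewrite mulr_ge0 ?cyl_left_ge0 // ltW.
by move=> h1 h2; apply/andP; split; lra.
Qed.

Lemma in_cyl_prefix c1 c2 x : in_cyl c1 x -> in_cyl c2 x -> prefix c1 c2 || prefix c2 c1.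
Proof.
elim: c1 c2 x => [|a c1 IH] [|b c2] x //=; rewrite ?orbT //.
case: (eqVneq a b) => [<-|ab] /=; first by rewrite !in_cyl_cons; exact: IH.
move=> /in_cyl_cons_digit/andP[xa1 xa2] /in_cyl_cons_digit/andP[xb1 xb2]; exfalso.
by case: (ltngtP a b) => [/qbeta_lt|/qbeta_lt|/val_inj abE]; [lra|lra|rewrite abE eqxx in ab].
Qed.

Definition cyl_endpoint (x : R) : Prop :=
  exists c, x = cyl_left q c \/ x = cyl_left q c + cyl_len q c.

Lemma digit_exists x : 0 < x < 1 -> ~ cyl_endpoint x ->
  exists a, qbeta q a < x < qbeta q a + q a.
Proof.
move=> /andP[x0 x1] xNend.
have [|k xk kmin] := ex_minnP (P := fun k => x < qpart k); first by exists s; rewrite qpart_ge.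
case: k xk kmin => [|k] xk kmin; first by rewrite qpart0 in xk; lra.
have ks : (k < s)%N.
  by rewrite ltnNge; apply/negP => /qpart_ge qk; have := kmin k; rewrite qk x1 ltnn => /(_ isT).
have kx : qpart k <= x by rewrite leNgt; apply/negP => /kmin; rewrite ltnn.
exists (Ordinal ks); rewrite qbeta_addq xk andbT lt_neqAle kx andbT.
apply/negP => /eqP kxE; apply: xNend; exists [:: Ordinal ks]; left.
by rewrite /= mulr0 addr0.
Qed.

Lemma rescale_not_endpoint a x : ~ cyl_endpoint x -> ~ cyl_endpoint ((x - qbeta q a) / q a).
Proof.
move=> xNend [c cE]; apply: xNend; exists (a :: c).
have xE : x = qbeta q a + q a * ((x - qbeta q a) / q a).
  by rewrite mulrC divfK ?gt_eqF // addrC subrK.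
by rewrite /= cyl_len_cons xE; case: cE => ->; [left|right; rewrite mulrDr addrA].
Qed.

Lemma rescale_in01 a x : qbeta q a < x < qbeta q a + q a -> 0 < (x - qbeta q a) / q a < 1.
Proof.
move=> /andP[x1 x2]; have qa := q_gt0 a.
by rewrite ltr_pdivlMr // ltr_pdivrMr // mul0r mul1r; apply/andP; split; lra.
Qed.

Definition stop_cyl (d : R) (c : seq 'I_s) : Prop :=
  exists c' a, c = rcons c' a /\ cyl_len q c <= d < cyl_len q c'.

Lemma stop_cyl_len d c : stop_cyl d c -> qmin * d <= cyl_len q c <= d.
Proof.
move=> [c' [a [-> /andP[cd dc']]]]; rewrite cd andbT cyl_len_rcons mulrC.
by rewrite ler_pM ?qmin_le ?(ltW qmin_gt0) // ltW // (lt_le_trans (cyl_len_gt0 _) cd).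
Qed.

Lemma stop_cyl_exists (s_ge2 : (2 <= s)%N) d x : 0 < d < 1 -> 0 < x < 1 ->
  ~ cyl_endpoint x -> exists2 c, stop_cyl d c & in_cyl c x.
Proof.
move=> /andP[d0 d1].
have i0 : 'I_s by exists 0%N; exact: ltnW.
have contr01 : 0 <= 1 - qmin < 1.
  by have := qmin_gt0; have := q_le1_qmin s_ge2 i0; have := q_gt0 i0; lra.
(* Reading a digit [a] with [d < q a] rescales [d] into [d / q a >= d / (1 - qmin)];
   as [d] stays below 1, at most [n] digits are read when [(1 - qmin) ^+ n <= d]. *)
have [n dn] := exists_expr_le contr01 d0.
elim: n x d d0 d1 dn => [|n IH] x d d0 d1 dn x01 xNend; first by rewrite expr0 in dn; lra.
have [a xa] := digit_exists x01 xNend; have qa := q_gt0 a.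
have xa' := rescale_in01 xa; have xNend' := rescale_not_endpoint (a := a) xNend.
have [qad|dqa] := lerP (q a) d.
  exists [:: a]; last by rewrite in_cyl_cons /in_cyl /= cyl_len_nil add0r.
  by exists [::], a; rewrite cyl_len_cons cyl_len_nil mulr1 qad d1.
have [|||c [c' [b [-> /andP[cd dc']]]] xc] := IH _ (d / q a) _ _ _ xa' xNend'.
- by rewrite divr_gt0.
- by rewrite ltr_pdivrMr // mul1r.
- rewrite ler_pdivlMr // mulrC (le_trans _ dn) // exprS ler_wpM2r ?exprn_ge0 //.
    by case/andP: contr01.
  exact: q_le1_qmin.
exists (a :: rcons c' b); last by rewrite in_cyl_cons.
exists (a :: c'), b; rewrite !cyl_len_cons -ler_pdivlMl // -ltr_pdivrMl //.
by rewrite !(mulrC (q a)^-1) cd dc'.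
Qed.

Lemma stop_cyl_prefix d c1 c2 : stop_cyl d c1 -> stop_cyl d c2 -> prefix c1 c2 -> c1 = c2.
Proof.
move=> [c1' [a1 [-> /andP[c1d _]]]] [c2' [a2 [-> /andP[_ dc2']]]] /prefixP[t].
case/lastP: t => [|t b]; first by rewrite cats0.
rewrite -rcons_cat => /eqP; rewrite eqseq_rcons => /andP[/eqP c2'E _]; exfalso.
by have := cyl_len_cat_le (rcons c1' a1) t; rewrite -c2'E; lra.
Qed.

Lemma stop_cyl_disjoint d c1 c2 x : stop_cyl d c1 -> stop_cyl d c2 ->
  in_cyl c1 x -> in_cyl c2 x -> c1 = c2.
Proof.
move=> st1 st2 x1 x2; case/orP: (in_cyl_prefix x1 x2) => [/(stop_cyl_prefix st1 st2)//|].
by move/(stop_cyl_prefix st2 st1).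
Qed.

End QExpansion.

Section Packing.
Variable R : realType.
Implicit Types (Adm : set (R * R)) (E : set R) (P : set (R * R)).

Lemma is_packing0 Adm eps E : is_packing Adm eps E set0.
Proof. by split => //; exact: countable0. Qed.

Lemma is_packing_sub Adm Adm' eps eps' E E' P P' :
  Adm `<=` Adm' -> eps <= eps' -> E `<=` E' -> P' `<=` P ->
  is_packing Adm eps E P -> is_packing Adm' eps' E' P'.
Proof.
move=> sAdm le_eps sE sP [cP PAdm Pitv Pdisj]; split.
- exact: sub_countable (subset_card_le sP) cP.
- by move=> p /sP /PAdm /sAdm.
- move=> p /sP /Pitv [p12 lenp [x [px Ex]]]; split => //; first exact: le_trans le_eps.
  by exists x; split => //; exact: sE.
- by move=> p p' /sP Pp /sP Pp'; exact: Pdisj.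
Qed.

Lemma is_packing_shrink Adm eps eps' E P : is_packing Adm eps E P ->
  (forall p, P p -> p.2 - p.1 <= eps') -> is_packing Adm eps' E P.
Proof.
move=> [cP PAdm Pitv Pdisj] P_short; split => // p Pp.
by have [p12 _ pE] := Pitv p Pp; split => //; exact: P_short.
Qed.

Lemma pack_eps_ge0 Adm alpha eps E : (0 <= pack_eps Adm alpha eps E)%E.
Proof. by apply: ereal_sup_ubound; exists set0; rewrite ?esum_set0 //; exact: is_packing0. Qed.

Lemma pack0_ge0 Adm alpha E : (0 <= pack0 Adm alpha E)%E.
Proof. by apply: le_ereal_inf_tmp => _ [e _ <-]; exact: pack_eps_ge0. Qed.

Lemma pack_measure_ge0 Adm alpha E : (0 <= pack_measure Adm alpha E)%E.
Proof.
apply: le_ereal_inf_tmp => _ [G _ <-]; apply: nneseries_ge0 => n _ _.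
exact: pack0_ge0.
Qed.

Lemma pack_eps_le_sub Adm Adm' alpha eps eps' E E' :
  Adm `<=` Adm' -> eps <= eps' -> E `<=` E' ->
  (pack_eps Adm alpha eps E <= pack_eps Adm' alpha eps' E')%E.
Proof.
move=> sAdm le_eps sE; apply: ge_ereal_sup => _ [P PE <-].
by apply: ereal_sup_ubound; exists P => //; exact: is_packing_sub PE.
Qed.

Lemma pack0_le_sub Adm Adm' alpha E E' : Adm `<=` Adm' -> E `<=` E' ->
  (pack0 Adm alpha E <= pack0 Adm' alpha E')%E.
Proof.
move=> sAdm sE; apply: le_ereal_inf_tmp => _ [e e0 <-].
apply: le_trans (pack_eps_le_sub alpha sAdm (lexx e) sE).
by apply: ereal_inf_lbound; exists e.
Qed.

Lemma pack_measure_subAdm Adm Adm' alpha E : Adm `<=` Adm' ->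
  (pack_measure Adm alpha E <= pack_measure Adm' alpha E)%E.
Proof.
move=> sAdm; apply: le_ereal_inf_tmp => _ [G EG <-].
apply: le_trans (_ : _ <= \sum_(j <oo) pack0 Adm alpha (G j))%E _.
  by apply: ereal_inf_lbound; exists G.
by apply: lee_nneseries => [n _ _|n _]; [exact: pack0_ge0|exact: pack0_le_sub].
Qed.

Lemma sum_le_pack_eps Adm alpha eps E (r : seq (R * R)) :
  uniq r -> is_packing Adm eps E [set` r] ->
  ((\sum_(p <- r) (p.2 - p.1) `^ alpha)%:E <= pack_eps Adm alpha eps E)%E.
Proof.
move=> r_uniq r_pack.
apply: le_trans (_ : _ <= \esum_(p in [set` r]) ((p.2 - p.1) `^ alpha)%:E)%E _.
  apply: esum_ge; exists [set` r]; first by split => //; exact: finite_seq.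
  by rewrite -sumEFin fsbig_seq.
by apply: ereal_sup_ubound; exists [set` r].
Qed.

Lemma pack_eps_le Adm alpha eps E (M : R) :
  (forall r : seq (R * R), uniq r -> is_packing Adm eps E [set` r] ->
     \sum_(p <- r) (p.2 - p.1) `^ alpha <= M) ->
  (pack_eps Adm alpha eps E <= M%:E)%E.
Proof.
move=> sum_le; apply: ge_ereal_sup => _ [P P_pack <-].
apply: ge_ereal_sup => _ [X [X_fin XP] <-].
rewrite fsbig_finite //= sumEFin lee_fin; apply: sum_le; first exact: finmap.fset_uniq.
by apply: is_packing_sub P_pack => //; rewrite fset_setK.
Qed.

Lemma pack0_eq0 Adm alpha E :
  (forall e : R, 0 < e -> exists2 eps, 0 < eps & (pack_eps Adm alpha eps E <= e%:E)%E) ->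
  pack0 Adm alpha E = 0%E.
Proof.
move=> small; apply/eqP; rewrite eq_le pack0_ge0 andbT.
apply/lee_addgt0Pr => e e0; rewrite add0e.
have [eps eps0 le_e] := small e e0.
by apply: le_trans le_e; apply: ereal_inf_lbound; exists eps.
Qed.

Lemma pack0_set1 beta (x : R) : 0 < beta -> pack0 setT beta [set x] = 0%E.
Proof.
move=> beta0; apply: pack0_eq0 => e e0; exists (e `^ beta^-1); first exact: powR_gt0.
apply: pack_eps_le => -[|p r]; first by rewrite big_nil ltW.
move=> /= /andP[pNr _] [_ _ r_itv r_disj].
have x_in p' : p' \in p :: r -> x \in `]p'.1, p'.2[.
  by move=> /r_itv [_ _ [y [py /= yx]]]; rewrite -yx.
case: r pNr x_in r_itv r_disj => [|p' r] pNr x_in r_itv r_disj; last first.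
  have pp' : p <> p' by move=> pp'; rewrite pp' inE eqxx in pNr.
  have /seteqP[/(_ x) disj _] : `]p.1, p.2[ `&` `]p'.1, p'.2[ = set0.
    by apply: r_disj pp'; rewrite /= !inE eqxx ?orbT.
  by exfalso; apply: disj; split; apply: x_in; rewrite !inE eqxx ?orbT.
have [p12 lenp _] := r_itv p (mem_head p _).
have eE : (e `^ beta^-1) `^ beta = e by rewrite -powRrM mulVf ?gt_eqF // powRr1 // ltW.
rewrite big_seq1 -[leRHS]eE.
by apply: ge0_ler_powR; rewrite ?nnegrE ?subr_ge0 ?powR_ge0 // ltW.
Qed.

Lemma pack_measure_eq0_cover Adm beta E (H : nat -> set R) :
  E `<=` \bigcup_n H n -> (forall n, pack0 Adm beta (H n) = 0%E) ->
  pack_measure Adm beta E = 0%E.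
Proof.
move=> EH H0; apply/eqP; rewrite eq_le pack_measure_ge0 andbT.
by apply: ereal_inf_lbound; exists H => //; exact: eseries0.
Qed.

Lemma pack_measure_lt_cover Adm alpha E : (pack_measure Adm alpha E < +oo)%E ->
  exists2 G : nat -> set R, E `<=` \bigcup_j G j & forall j, (pack0 Adm alpha (G j) < +oo)%E.
Proof.
move=> /ereal_inf_lt [_ [G EG <-] sum_fin]; exists G => // j.
have G_ge0 n : (0 <= pack0 Adm alpha (G n))%E by exact: pack0_ge0.
apply: le_lt_trans sum_fin; apply: le_trans (nneseries_lim_ge j.+1 (fun n _ _ => G_ge0 n)).
rewrite big_nat_recr /=; last exact: leq0n.
by rewrite leeDr //; apply: sume_ge0 => n _.
Qed.

Lemma pack_dim_subAdm Adm Adm' E : Adm `<=` Adm' -> (pack_dim Adm E <= pack_dim Adm' E)%E.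
Proof.
move=> sAdm; apply: le_ereal_inf_tmp => _ [a [a0 Ea0] <-]; apply: ereal_inf_lbound.
exists a => //; split => //; apply/eqP; rewrite eq_le pack_measure_ge0 andbT -Ea0.
exact: pack_measure_subAdm.
Qed.

Lemma pack_dim_le Adm Adm' E :
  (forall a b : R, 0 <= a -> a < b -> pack_measure Adm a E = 0%E ->
     pack_measure Adm' b E = 0%E) ->
  (pack_dim Adm' E <= pack_dim Adm E)%E.
Proof.
move=> zero_up; apply: le_ereal_inf_tmp => _ [a [a0 Ea0] <-].
apply/lee_addgt0Pr => e e0; apply: ereal_inf_lbound; exists (a + e); last exact: EFinD.
by split; [rewrite addr_ge0 // ltW|apply: zero_up Ea0; rewrite // ltrDl].
Qed.

End Packing.

Section StoppingCount.
Variables (R : realType) (s : nat) (q : 'I_s -> R).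
Hypothesis s_ge2 : (2 <= s)%N.
Hypothesis q_gt0 : forall i, 0 < q i.
Hypothesis sum_q : \sum_(i < s) q i = 1.

Definition cyl_itv (c : seq 'I_s) : R * R := (cyl_left q c, cyl_left q c + cyl_len q c).

Lemma stop_cyl_packing d F (C : seq (seq 'I_s)) :
  (forall c, c \in C -> stop_cyl q d c /\ exists2 x, F x & in_cyl q c x) ->
  is_packing (qcyl_interiors q) d F [set` map cyl_itv C].
Proof.
move=> C_stop; split.
- exact/finite_set_countable/finite_seq.
- by move=> _ /mapP[c _ ->]; exists c.
- move=> _ /mapP[c /C_stop[c_stop [x Fx xc]] ->] /=.
  have /andP[_ cd] := stop_cyl_len q_gt0 sum_q c_stop.
  split; first by rewrite ltrDl cyl_len_gt0.
    by rewrite addrC addKr.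
  by exists x; split => //=; rewrite in_itv.
- move=> _ _ /mapP[c /C_stop[c_stop _] ->] /mapP[c' /C_stop[c'_stop _] ->] cc'.
  apply/seteqP; split => // z [/= zc zc']; apply: cc'; congr cyl_itv.
  by move: zc zc'; rewrite !in_itv; exact: stop_cyl_disjoint c_stop c'_stop.
Qed.

Lemma stop_cyl_count d F r : 0 < d < 1 ->
  (forall x, F x -> 0 < x < 1 /\ ~ cyl_endpoint q x) ->
  uniq r -> is_packing setT d F [set` r] -> (forall p, p \in r -> d / 2 < p.2 - p.1) ->
  exists B, [/\ uniq B, is_packing (qcyl_interiors q) d F [set` B],
    (forall b, b \in B -> qmin q * d <= b.2 - b.1) & (size r <= 4 * size B)%N].
Proof.
move=> /andP[d0 d1] F_good r_uniq [_ _ r_itv r_disj] r_long.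
have /choice[f f_spec] : forall p, exists y : R * seq 'I_s, p \in r ->
    [/\ F y.1, p.1 < y.1 < p.2, stop_cyl q d y.2 & in_cyl q y.2 y.1].
  move=> p; case: (boolP (p \in r)) => [pr|]; last by exists (0, [::]).
  have [_ _ [x [px Fx]]] := r_itv p pr; have [x01 xNend] := F_good x Fx.
  have [|c c_stop xc] := stop_cyl_exists q_gt0 sum_q s_ge2 (d := d) _ x01 xNend; first by rewrite d0.
  by exists (x, c); split; rewrite // -[_ < x < _]/(x \in `]p.1, p.2[).
(* [slot p] is the cell of width d/2 of ]l - d, l + d[ containing [p.1], where l is
   the left end of the cylinder attached to [p]; disjoint intervals longer than
   d/2 attached to the same cylinder fall into distinct cells. *)
pose anchor p := (cyl_itv (f p).2).1 - d.
pose slot p : 'I_4 := inord (Num.trunc ((p.1 - anchor p) / (d / 2))).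
have slot_spec p : p \in r ->
    anchor p <= p.1 /\ (Num.trunc ((p.1 - anchor p) / (d / 2)) < 4)%N.
  move=> pr; have [_ /andP[px xp] c_stop /andP[cx xc]] := f_spec p pr.
  have /andP[_ cd] := stop_cyl_len q_gt0 sum_q c_stop; have [_ lenp _] := r_itv p pr.
  have ap : anchor p <= p.1 by rewrite /anchor /=; lra.
  split; rewrite // truncn_lt_nat ?divr_ge0 ?subr_ge0 // ?ltr_pdivrMr /anchor /=; lra.
have slot_lt p p' : p \in r -> p' \in r -> p <> p' -> p.1 <= p'.1 ->
    cyl_itv (f p).2 = cyl_itv (f p').2 -> (slot p < slot p')%N.
  move=> pr p'r pp' le_pp' fpp'; have [ap slotp] := slot_spec p pr.
  have [_ slotp'] := slot_spec p' p'r; rewrite /slot !inordK //.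
  have [p'12 _ _] := r_itv p' p'r.
  have := itv_disjoint_le p'12 le_pp' (r_disj p p' pr p'r pp').
  rewrite /anchor -fpp' => p2p'; apply: truncn_sep => //; first lra.
  by have := r_long p pr; lra.
exists (undup (map cyl_itv (map (fun p => (f p).2) r))); split.
- exact: undup_uniq.
- apply: is_packing_sub (stop_cyl_packing (F := F) (C := map (fun p => (f p).2) r) _) => //.
    by move=> b; rewrite /= mem_undup; exact: id.
  by move=> c /mapP[p pr ->]; have [Fx px c_stop xc] := f_spec p pr; split => //; exists (f p).1.
- move=> b; rewrite mem_undup => /mapP[c /mapP[p pr ->] ->] /=.
  have [_ _ c_stop _] := f_spec p pr.
  by rewrite addrC addKr; case/andP: (stop_cyl_len q_gt0 sum_q c_stop).
- rewrite -map_comp; apply: size_le_mul_undup (slot) r_uniq _ => p p' pr p'r pp'E.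
  have /= fpp' := congr1 fst pp'E; have /= slotpp' := congr1 snd pp'E.
  apply: contrapT => pp'.
  have [le_pp'|/ltW le_p'p] := leP p.1 p'.1.
    by have := slot_lt p p' pr p'r pp' le_pp' fpp'; rewrite slotpp' ltnn.
  by have := slot_lt p' p p'r pr (nesym pp') le_p'p (esym fpp'); rewrite slotpp' ltnn.
Qed.

End StoppingCount.

Section UncenteredBound.
Variables (R : realType) (s : nat) (q : 'I_s -> R).
Hypothesis s_ge2 : (2 <= s)%N.
Hypothesis q_gt0 : forall i, 0 < q i.
Hypothesis sum_q : \sum_(i < s) q i = 1.
Variables (F : set R) (a b d0 M : R).
Hypothesis F_good : forall x, F x -> 0 < x < 1 /\ ~ cyl_endpoint q x.
Hypotheses (a_ge0 : 0 <= a) (a_lt_b : a < b) (d0_gt0 : 0 < d0) (d0_lt1 : d0 < 1).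
Hypothesis cyl_pack_le : (pack_eps (qcyl_interiors q) a d0 F <= M%:E)%E.

Local Notation C := (4 * M / qmin q `^ a).
Local Notation rho := (2^-1 `^ (b - a)).

Let C_ge0 : 0 <= C.
Proof.
have M_ge0 : 0 <= M by rewrite -lee_fin (le_trans _ cyl_pack_le) ?pack_eps_ge0.
by rewrite divr_ge0 ?mulr_ge0 ?powR_ge0.
Qed.

Let rho_gt0 : 0 < rho.
Proof. by rewrite powR_gt0 // invr_gt0. Qed.

Let rho_lt1 : rho < 1.
Proof.
have := @gt0_ltr_powR R (b - a) _ 2^-1 1; rewrite powR1; apply; rewrite ?subr_gt0 //.
- by rewrite nnegrE invr_ge0.
- by rewrite nnegrE.
- by rewrite invf_lt1 // ltr1n.
Qed.

Lemma dyadic_class_count d r : 0 < d <= d0 -> uniq r -> is_packing setT d F [set` r] ->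
  (forall p, p \in r -> d / 2 < p.2 - p.1) -> (size r)%:R * (qmin q * d) `^ a <= 4 * M.
Proof.
move=> /andP[d_gt0 d_le] r_uniq r_pack r_long.
have [|B [B_uniq B_pack B_long size_rB]] :=
  stop_cyl_count s_ge2 q_gt0 sum_q (d := d) _ F_good r_uniq r_pack r_long.
  by rewrite d_gt0 (le_lt_trans d_le).
have sum_B : \sum_(p <- B) (p.2 - p.1) `^ a <= M.
  rewrite -lee_fin (le_trans _ cyl_pack_le) // sum_le_pack_eps //.
  exact: is_packing_sub B_pack.
have size_B : (size B)%:R * (qmin q * d) `^ a <= M.
  apply: le_trans sum_B; rewrite mulr_natl -sumr_const_seq big_seq [leRHS]big_seq.
  apply: ler_sum => p pB; apply: ge0_ler_powR; rewrite ?nnegrE ?B_long //.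
    by rewrite mulr_ge0 ?ltW ?qmin_gt0.
  by rewrite (le_trans _ (B_long p pB)) // mulr_ge0 ?ltW ?qmin_gt0.
apply: le_trans (_ : 4%:R * ((size B)%:R * (qmin q * d) `^ a) <= _); last by rewrite ler_pM2l.
by rewrite mulrA -natrM ler_wpM2r ?powR_ge0 // ler_nat.
Qed.

Lemma dyadic_class_sum_le d r : 0 < d <= d0 -> uniq r -> is_packing setT d F [set` r] ->
  (forall p, p \in r -> d / 2 < p.2 - p.1) ->
  \sum_(p <- r) (p.2 - p.1) `^ b <= C * d `^ (b - a).
Proof.
move=> d_range r_uniq r_pack r_long; have [_ _ r_itv _] := r_pack.
have d_gt0 : 0 < d by case/andP: d_range.
have qmin0 := qmin_gt0 q_gt0.
apply: (@le_trans _ _ ((size r)%:R * d `^ b)).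
  rewrite mulr_natl -sumr_const_seq big_seq [leRHS]big_seq; apply: ler_sum => p pr.
  have [p12 pd _] := r_itv p pr.
  apply: ge0_ler_powR => //; rewrite ?nnegrE.
  - exact: ltW (le_lt_trans a_ge0 a_lt_b).
  - by rewrite subr_ge0 ltW.
  - exact: ltW.
have -> : d `^ b = d `^ a * d `^ (b - a).
  rewrite -powRD; first by rewrite addrCA subrr addr0.
  by rewrite (gt_eqF d_gt0) /= implybT.
rewrite mulrA ler_wpM2r ?powR_ge0 // /C ler_pdivlMr ?powR_gt0 //.
by rewrite -mulrA -powRM ?(ltW d_gt0) ?(ltW qmin0) // [d * _]mulrC dyadic_class_count.
Qed.

(* [n] bounds the number of halvings of [d] after which no interval of [r] is left. *)
Lemma sum_short_itv_le n d r : 0 < d <= d0 -> uniq r -> is_packing setT d0 F [set` r] ->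
  (forall p, p \in r -> d * 2^-1 ^+ n < p.2 - p.1) ->
  \sum_(p <- r | p.2 - p.1 <= d) (p.2 - p.1) `^ b <= C * d `^ (b - a) / (1 - rho).
Proof.
have rho1 : 0 < 1 - rho by rewrite subr_gt0.
elim: n d => [|n IH] d /andP[d_gt0 d_le] r_uniq r_pack r_long.
  rewrite big_seq_cond big1 => [|p /andP[pr pd]]; last by have := r_long p pr; rewrite expr0 mulr1; lra.
  by rewrite divr_ge0 ?(ltW rho1) // mulr_ge0 ?powR_ge0.
have d2 : 0 < d / 2 <= d0 by rewrite divr_gt0 //=; lra.
rewrite (bigID (fun p => p.2 - p.1 <= d / 2)) /=.
have -> : \sum_(p <- r | (p.2 - p.1 <= d) && (p.2 - p.1 <= d / 2)) (p.2 - p.1) `^ b =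
          \sum_(p <- r | p.2 - p.1 <= d / 2) (p.2 - p.1) `^ b.
  by apply: eq_bigl => p; rewrite andb_idl // => /le_trans; apply; lra.
have upper : \sum_(p <- r | (p.2 - p.1 <= d) && ~~ (p.2 - p.1 <= d / 2)) (p.2 - p.1) `^ b
    <= C * d `^ (b - a).
  rewrite -big_filter; apply: dyadic_class_sum_le; rewrite ?d_gt0 ?filter_uniq //.
    apply: is_packing_shrink (is_packing_sub _ (lexx d0) _ _ r_pack) _ => // [p|p].
      by rewrite /= mem_filter => /andP[].
    by rewrite /= mem_filter => /andP[/andP[]].
  by move=> p; rewrite mem_filter -ltNge => /andP[/andP[_]].
have lower := IH (d / 2) d2 r_uniq r_pack.
rewrite -(mulrA d) -exprS in lower; have {}lower := lower r_long.
rewrite powRM ?(ltW d_gt0) ?invr_ge0 // in lower.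
suff <- : C * (d `^ (b - a) * rho) / (1 - rho) + C * d `^ (b - a) = C * d `^ (b - a) / (1 - rho).
  exact: lerD lower upper.
by field; rewrite !gt_eqF ?powR_gt0 ?qmin_gt0.
Qed.

Lemma unc_packing_sum_le d r : 0 < d <= d0 -> uniq r -> is_packing setT d F [set` r] ->
  \sum_(p <- r) (p.2 - p.1) `^ b <= C * d `^ (b - a) / (1 - rho).
Proof.
move=> d_range r_uniq r_pack; have [_ _ r_itv _] := r_pack.
have /andP[d_gt0 d_le] := d_range.
have [|m m_gt0 mr] := @exists_itv_len_lb R r; first by move=> p /r_itv[].
have [n dn] : exists n, 2^-1 ^+ n <= m / (2 * d).
  apply: exists_expr_le; last by rewrite divr_gt0 ?mulr_gt0.
  by rewrite invr_ge0 ler0n invf_lt1 ?ltr0n // ltr1n.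
have -> : \sum_(p <- r) (p.2 - p.1) `^ b = \sum_(p <- r | p.2 - p.1 <= d) (p.2 - p.1) `^ b.
  by rewrite big_seq [RHS]big_seq_cond; apply: eq_bigl => p; case: (boolP (p \in r)) => // /r_itv[].
apply: (sum_short_itv_le (n := n)) => //; first exact: is_packing_sub _ d_le _ _ r_pack.
move=> p pr; apply: lt_le_trans (mr p pr).
apply: le_lt_trans (ler_wpM2l (ltW d_gt0) dn) _.
have -> : d * (m / (2 * d)) = m / 2 by field; rewrite gt_eqF.
lra.
Qed.

Lemma pack_eps_unc_small e : 0 < e -> exists2 eps, 0 < eps & (pack_eps setT b eps F <= e%:E)%E.
Proof.
move=> e_gt0; have ba : 0 < b - a by rewrite subr_gt0.
have rho1 : 0 < 1 - rho by rewrite subr_gt0.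
pose delta := (e * (1 - rho) / (C + 1)) `^ (b - a)^-1.
have delta_gt0 : 0 < delta by rewrite powR_gt0 // divr_gt0 ?mulr_gt0 // ltr_wpDl.
exists (Num.min d0 delta); first by rewrite lt_min d0_gt0.
apply: pack_eps_le => r r_uniq r_pack.
apply: le_trans (unc_packing_sum_le _ r_uniq r_pack) _; first by rewrite lt_min d0_gt0 delta_gt0 ge_min lexx.
have small : (Num.min d0 delta) `^ (b - a) <= e * (1 - rho) / (C + 1).
  apply: le_trans (_ : delta `^ (b - a) <= _).
    apply: ge0_ler_powR; rewrite ?nnegrE ?(ltW ba) ?(ltW delta_gt0) //.
      by rewrite le_min (ltW d0_gt0) (ltW delta_gt0).
    by rewrite ge_min lexx orbT.
  by rewrite -powRrM mulVf ?gt_eqF // powRr1 // divr_ge0 ?mulr_ge0 ?ltW // ltr_wpDl.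
rewrite ler_pdivrMr // (le_trans (ler_wpM2l C_ge0 small)) // mulrA ler_pdivrMr ?ltr_wpDl //.
by rewrite [leRHS]mulrDr mulr1 mulrC lerDl mulr_ge0 // ltW.
Qed.

End UncenteredBound.

Section QCylPacking.
Variables (R : realType) (s : nat) (q : 'I_s -> R).
Hypothesis s_ge2 : (2 <= s)%N.
Hypothesis q_gt0 : forall i, 0 < q i.
Hypothesis sum_q : \sum_(i < s) q i = 1.

Lemma pack0_unc_eq0 (F : set R) (a b : R) :
  (forall x, F x -> 0 < x < 1 /\ ~ cyl_endpoint q x) -> 0 <= a -> a < b ->
  (pack0 (qcyl_interiors q) a F < +oo)%E -> pack0 setT b F = 0%E.
Proof.
move=> F_good a_ge0 ab /ereal_inf_lt[_ [d1 d1_gt0 <-] d1_fin].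
pose d0 := Num.min d1 2^-1.
have d0_gt0 : 0 < d0 by rewrite lt_min d1_gt0 invr_gt0 ltr0n.
have d0_lt1 : d0 < 1 by rewrite gt_min invf_lt1 ?ltr0n // ltr1n orbT.
have pack_d0 : (pack_eps (qcyl_interiors q) a d0 F <=
                (fine (pack_eps (qcyl_interiors q) a d1 F))%:E)%E.
  rewrite fineK; last by rewrite ge0_fin_numE ?pack_eps_ge0.
  by apply: pack_eps_le_sub; rewrite // ge_min lexx.
apply: pack0_eq0 => e e_gt0.
by have := pack_eps_unc_small s_ge2 q_gt0 sum_q F_good a_ge0 ab d0_gt0 d0_lt1 pack_d0 e_gt0.
Qed.

Lemma cyl_endpoint_enum : exists pt : nat -> R, forall x, cyl_endpoint q x -> exists n, x = pt n.
Proof.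
pose pt n := if unpickle n is Some (c, is_left) then
  (if is_left then cyl_left q c else cyl_left q c + cyl_len q c) else 0.
exists pt => x [c [->|->]]; [exists (pickle (c, true))|exists (pickle (c, false))];
  by rewrite /pt pickleK.
Qed.

Lemma pack_measure_unc_eq0 (E : set R) (a b : R) : E `<=` `[0, 1] -> 0 <= a -> a < b ->
  pack_measure (qcyl_interiors q) a E = 0%E -> pack_measure setT b E = 0%E.
Proof.
move=> E01 a_ge0 ab Ea0.
have [|G EG G_fin] := @pack_measure_lt_cover R (qcyl_interiors q) a E; first by rewrite Ea0 ltry.
have [pt pt_enum] := cyl_endpoint_enum.
pose good x := 0 < x < 1 /\ ~ cyl_endpoint q x.
pose H n := if odd n then [set pt n./2] else G n./2 `&` good.
apply: (@pack_measure_eq0_cover R _ _ _ H) => [x Ex|n].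
  have [/pt_enum[n ->]|xNend] := pselect (cyl_endpoint q x).
    by exists n.*2.+1 => //; rewrite /H /= odd_double /= uphalf_double.
  have x_ne0 : x != 0 by apply/eqP => x0; apply: xNend; exists [::]; left; rewrite x0.
  have x_ne1 : x != 1.
    by apply/eqP => x1; apply: xNend; exists [::]; right; rewrite x1 /= cyl_len_nil add0r.
  have /andP[x0 x1] : 0 <= x <= 1 by have := E01 x Ex; rewrite /= in_itv.
  have [j _ Gjx] := EG x Ex; exists j.*2 => //; rewrite /H odd_double half_double.
  by split => //; split => //; rewrite !lt_neqAle eq_sym x_ne0 x_ne1 x0 x1.
rewrite /H; case: odd; first by apply: pack0_set1; exact: le_lt_trans ab.
apply: pack0_unc_eq0 a_ge0 ab _ => [x []//|].
apply: le_lt_trans (G_fin n./2); exact: pack0_le_sub.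
Qed.

End QCylPacking.

Unset Implicit Arguments.

Theorem corollary3 (R : realType) (s : nat) (q : 'I_s -> R) :
  (2 <= s)%N -> (forall i, 0 < q i) -> \sum_(i < s) q i = 1 ->
  forall E : set R, E `<=` `[0, 1] ->
    pack_dim (qcyl_interiors q) E = pack_dim_unc E.
Proof.
move=> s_ge2 q_gt0 sum_q E E01; apply/eqP; rewrite eq_le; apply/andP; split.
  exact: pack_dim_subAdm.
apply: pack_dim_le => a b a_ge0 ab; exact: pack_measure_unc_eq0.
Qed.
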